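(* Assume Banderier's conjecture. Then for every $i\ge1$ such that $p_i\#-1$ is not a prime, the primorial $p_i\#$ belongs to the set $S$.
   Context: Let $p_1<p_2<\cdots$ be the primes and $p_i\#=p_1p_2\cdots p_i$ the $i$-th primorial. Banderier's conjecture: for every $i\ge2$, if $q$ is the largest prime smaller than $p_i\#$, then either $p_i\#-q=1$ or $p_i\#-q$ is a prime. Let $S$ be the set of integers $n\ge2$ such that, writing $p^a$ for the largest prime power dividing $n$, there is no prime $q$ with $n-p^a<q<n$. *)

From mathcomp Require Import all_boot.
Set Implicit Arguments. Unset Strict Implicit. Unset Printing Implicit Defensive.

Lemma next_prime_ex (m : nat) : exists p, (m < p) && prime p.
Proof. by case: (prime_above m) => p H1 H2; exists p; rewrite H1 H2. Qed.

Definition next_prime (m : nat) : nat := ex_minn (next_prime_ex m).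

(* pr j = the (j+1)-th prime, 0-indexed: pr 0 = 2, pr 1 = 3, ... *)
Fixpoint pr (j : nat) : nat :=
  match j with
  | 0 => 2
  | j'.+1 => next_prime (pr j')
  end.

(* p_i for i >= 1 (1-indexed as in the paper): p_1 = 2. *)
Definition nth_prime (i : nat) : nat := pr i.-1.

Definition primorial (i : nat) : nat := \prod_(1 <= k < i.+1) nth_prime k.

Definition banderier_conjecture : Prop :=
  forall i q : nat, 2 <= i ->
    prime q -> q < primorial i ->
    (forall r, prime r -> r < primorial i -> r <= q) ->
    primorial i - q = 1 \/ prime (primorial i - q).

Definition largest_prime_power (n m : nat) : Prop :=
  exists p a, [/\ prime p, 0 < a, m = p ^ a, p ^ a %| n &
    forall q b, prime q -> 0 < b -> q ^ b %| n -> q ^ b <= m].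

Definition in_S (n : nat) : Prop :=
  2 <= n /\ exists m, largest_prime_power n m /\
    ~ (exists q, [/\ prime q, n - m < q & q < n]).

(** Since p_i# is squarefree, its largest prime-power divisor is p_i itself.
   Suppose some prime lies in (p_i# - p_i, p_i#), and let q be the largest
   prime below p_i#; then d := p_i# - q < p_i.  Banderier's conjecture makes d
   prime (d = 1 would make p_i# - 1 prime), so d is one of p_1, ..., p_(i-1)
   and divides p_i#, hence divides q = p_i# - d; thus d = q.  But q >= p_i,
   since p_i is itself a prime below p_i#. *)

From mathcomp Require Import all_boot.
From mathcomp Require Import zify.

Lemma next_primeP m :
  [/\ prime (next_prime m), m < next_prime m
    & forall r, m < r -> prime r -> next_prime m <= r].
Proof.
rewrite /next_prime; case: ex_minnP => p /andP[lt_mp p_pr] p_min.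
by split=> // r lt_mr r_pr; apply: p_min; rewrite lt_mr r_pr.
Qed.

Lemma pr_prime j : prime (pr j).
Proof. by case: j => [|j] //=; case: (next_primeP (pr j)). Qed.

Lemma ltn_pr_next q j : prime q -> (q < pr j.+1) = (q <= pr j).
Proof.
move=> q_pr; have [_ lt_pj p_min] := next_primeP (pr j).
apply/idP/idP => [lt_q | le_q]; last exact: leq_ltn_trans lt_pj.
by rewrite leqNgt; apply/negP => /p_min /(_ q_pr); rewrite leqNgt lt_q.
Qed.

Lemma primorialS j : primorial j.+1 = primorial j * pr j.
Proof. by rewrite /primorial big_nat_recr. Qed.

Lemma primorial0 : primorial 0 = 1.
Proof. by rewrite /primorial big_geq. Qed.

Lemma primorial_gt0 j : 0 < primorial j.
Proof.
elim: j => [|j IHj]; first by rewrite primorial0.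
by rewrite primorialS muln_gt0 IHj prime_gt0 ?pr_prime.
Qed.

Lemma primorial_gt1 j : 1 < primorial j.+1.
Proof.
rewrite primorialS; apply: leq_trans (prime_gt1 (pr_prime j)) _.
by rewrite leq_pmull ?primorial_gt0.
Qed.

Lemma pr_ltn_primorial j : pr j.+1 < primorial j.+2.
Proof. by rewrite primorialS ltn_Pmull ?primorial_gt1 ?prime_gt0 ?pr_prime. Qed.

Lemma prime_dvd_primorial q j : prime q -> (q %| primorial j) = (q < pr j).
Proof.
move=> q_pr; elim: j => [|j IHj].
  by rewrite primorial0 dvdn1 ltnNge prime_gt1 //; case: eqP q_pr => // ->.
rewrite primorialS Euclid_dvdM // IHj dvdn_prime2 ?pr_prime //.
by rewrite ltn_pr_next // orbC -leq_eqVlt.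
Qed.

Lemma logn_primorial q j : logn q (primorial j) <= 1.
Proof.
have [q_pr | q_npr] := boolP (prime q); last by rewrite /logn (negbTE q_npr).
elim: j => [|j IHj]; first by rewrite primorial0 logn1.
rewrite primorialS lognM ?primorial_gt0 ?prime_gt0 ?pr_prime //.
rewrite (logn_prime _ (pr_prime j)).
have [q_dvd | q_ndvd] := boolP (q %| primorial j).
  move: (q_dvd); rewrite prime_dvd_primorial // => lt_q.
  by rewrite (ltn_eqF lt_q) addn0.
suff -> : logn q (primorial j) = 0 by case: (q == pr j).
by apply/eqP; rewrite eqn0Ngt logn_gt0 mem_primes q_pr primorial_gt0.
Qed.

Lemma largest_prime_power_squarefree n p :
  0 < n -> prime p -> p %| n ->
  (forall q, prime q -> q %| n -> q <= p) ->
  (forall q, logn q n <= 1) ->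
  largest_prime_power n p.
Proof.
move=> n_gt0 p_pr p_dvd p_max sqf; exists p, 1; rewrite expn1; split=> //.
move=> q b q_pr b_gt0 qb_dvd.
have b1 : b = 1.
  by move: qb_dvd; rewrite pfactor_dvdn // => /leq_trans /(_ (sqf q)); lia.
by move: qb_dvd; rewrite b1 expn1; apply: p_max.
Qed.

Lemma largest_prime_power_primorial j :
  largest_prime_power (primorial j.+1) (pr j).
Proof.
apply: largest_prime_power_squarefree; rewrite ?primorial_gt0 ?pr_prime //.
- by rewrite primorialS dvdn_mull.
- by move=> q q_pr; rewrite prime_dvd_primorial // ltn_pr_next.
- by move=> q; apply: logn_primorial.
Qed.

Section PrimeGap.

Variables n p : nat.
Hypothesis p_prime : prime p.
Hypothesis p_lt_n : p < n.
Hypothesis small_primes_dvd : forall d, prime d -> d < p -> d %| n.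
Hypothesis n1_not_prime : ~~ prime (n - 1).
Hypothesis banderier_at_n : forall q, prime q -> q < n ->
  (forall r, prime r -> r < n -> r <= q) -> n - q = 1 \/ prime (n - q).

Lemma max_prime_below r : prime r -> r < n ->
  exists q, [/\ prime q, q < n & forall x, prime x -> x < n -> x <= q].
Proof.
move=> r_pr lt_rn.
have ex_pr : exists x, prime x && (x < n) by exists r; rewrite r_pr lt_rn.
have ub_pr : forall x, prime x && (x < n) -> x <= n by move=> x /andP[_ /ltnW].
have [q /andP[q_pr lt_qn] q_max] := ex_maxnP ex_pr ub_pr.
by exists q; split=> // x x_pr lt_xn; apply: q_max; rewrite x_pr lt_xn.
Qed.

Lemma no_prime_in_gap : ~ exists r, [/\ prime r, n - p < r & r < n].
Proof.
move=> [r [r_pr gt_r lt_rn]].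
have [q [q_pr lt_qn q_max]] := max_prime_below _ r_pr lt_rn.
have le_rq := q_max r r_pr lt_rn.
have le_pq := q_max p p_prime p_lt_n.
have [n_q1 | d_pr] := banderier_at_n _ q_pr lt_qn q_max.
  have n1_q : n - 1 = q by lia.
  by move: n1_not_prime; rewrite n1_q q_pr.
have d_dvd_n : n - q %| n by apply: small_primes_dvd => //; lia.
have q_eq : q = n - (n - q) by lia.
have d_dvd_q : n - q %| q by rewrite {2}q_eq dvdn_sub.
by move: d_dvd_q; rewrite dvdn_prime2 // => /eqP; lia.
Qed.

End PrimeGap.

Theorem mainTheorem7 :
  banderier_conjecture ->
  forall i : nat, 1 <= i -> ~~ prime (primorial i - 1) -> in_S (primorial i).
Proof.
move=> banderier [//|j] _ n1_npr; split.
  exact: primorial_gt1.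
exists (pr j); split; first exact: largest_prime_power_primorial.
case: j n1_npr => [|j] n1_npr.
  by move=> [q [q_pr _]]; rewrite primorialS primorial0 ltnNge prime_gt1.
apply: no_prime_in_gap; rewrite ?pr_prime ?pr_ltn_primorial //.
- by move=> d d_pr lt_d; rewrite prime_dvd_primorial // ltn_pr_next // ltnW.
- by move=> q; apply: banderier.
Qed.
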